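(* Let $f\colon\mathbb{R}^k_+\to\operatorname{int}(\mathbb{R}^k_+)$ be continuous and concave with respect to the cone order, and let $U\subset\operatorname{int}(\mathbb{R}^k_+)$ be a compact set containing a nonempty open set. Then $f$ is a local $c$-Lipschitz contraction with respect to Thompson's metric on $U$; that is, there exists $c\in[0,1)$ such that $d_T(f(x),f(y))\le c\, d_T(x,y)$ for all $x,y\in U$.
   Context: $\mathbb{R}^k_+=\{x\in\mathbb{R}^k: x_i\ge 0\ \forall i\}$, $\operatorname{int}(\mathbb{R}^k_+)$ is the set of vectors with all coordinates strictly positive, and $x\le y$ means $y-x\in\mathbb{R}^k_+$. Concavity with respect to the cone order means $f(tx+(1-t)y)\ge tf(x)+(1-t)f(y)$ for all $x,y\in\mathbb{R}^k_+$, $t\in(0,1)$. Thompson's metric on $\operatorname{int}(\mathbb{R}^k_+)$ is $d_T(x,y)=\ln\big(\max\{M(x,y),M(y,x)\}\big)$ with $M(x,y)=\inf\{\beta>0: x\le\beta y\}$. Compactness and continuity refer to the usual topology of $\mathbb{R}^k$ (for subsets of $\operatorname{int}(\mathbb{R}^k_+)$, compactness in the usual topology coincides with compactness in $(\operatorname{int}(\mathbb{R}^k_+),d_T)$). *)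

From mathcomp Require Import all_boot all_order all_algebra.
From mathcomp Require Import all_classical all_reals all_analysis.
Import numFieldNormedType.Exports.
Set Implicit Arguments. Unset Strict Implicit. Unset Printing Implicit Defensive.
Import Order.TTheory GRing.Theory Num.Theory.
Local Open Scope classical_set_scope.
Local Open Scope ring_scope.

Definition cone (R : realType) (k : nat) : set 'rV[R]_k :=
  [set x | forall i : 'I_k, 0 <= x ord0 i].

Definition icone (R : realType) (k : nat) : set 'rV[R]_k :=
  [set x | forall i : 'I_k, 0 < x ord0 i].

Definition cle (R : realType) (k : nat) (x y : 'rV[R]_k) : Prop :=
  forall i : 'I_k, x ord0 i <= y ord0 i.

Definition cone_concave (R : realType) (k : nat) (f : 'rV[R]_k -> 'rV[R]_k) : Prop :=
  forall (x y : 'rV[R]_k) (t : R), cone x -> cone y -> 0 < t < 1 ->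
    cle (t *: f x + (1 - t) *: f y) (f (t *: x + (1 - t) *: y)).

Definition Mthom (R : realType) (k : nat) (x y : 'rV[R]_k) : R :=
  inf [set b : R | 0 < b /\ cle x (b *: y)].

Definition dT (R : realType) (k : nat) (x y : 'rV[R]_k) : R :=
  ln (Num.max (Mthom x y) (Mthom y x)).

From mathcomp Require Import all_boot all_order all_algebra.
From mathcomp Require Import all_classical all_reals all_analysis.
From mathcomp Require Import ring lra.
Import numFieldNormedType.Exports.
Set Implicit Arguments. Unset Strict Implicit. Unset Printing Implicit Defensive.
Import Order.TTheory GRing.Theory Num.Theory.
Local Open Scope classical_set_scope.
Local Open Scope ring_scope.

(* Positivity and concavity make [f] order-preserving on the cone.  If
   [x <= b y] with [b >= 1], write [y = x / b + (1 - 1/b) u] with [u] in the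
   cone; concavity together with [f u >= f 0 >= f x / e] (where [e] bounds [f]
   on [U] against [f 0]) sharpens the comparison to
   [f x <= b e / (e + b - 1) f y].  Compactness of [U] inside the open cone
   bounds the Thompson distances on [U] by [ln B], and
   [ln (b e / (e + b - 1)) <= (1 - 1 / (e + B - 1)) ln b] for [1 <= b <= B]. *)

Section ConeOrder.
Variables (R : realType) (k : nat).
Implicit Types (x y z w v : 'rV[R]_k) (a b : R).

Lemma cle_trans y x z : cle x y -> cle y z -> cle x z.
Proof. by move=> xy yz i; exact: le_trans (xy i) (yz i). Qed.

Lemma cle_scaler a x y : 0 <= a -> cle x y -> cle (a *: x) (a *: y).
Proof. by move=> a0 xy i; rewrite !mxE ler_wpM2l. Qed.

Lemma cle_scale_le a b x y : a <= b -> cone y -> cle x (a *: y) -> cle x (b *: y).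
Proof.
move=> ab cy xy i; apply: le_trans (xy i) _.
by rewrite !mxE ler_wpM2r.
Qed.

Lemma ratio_le_sum_ratio w v i : cone w -> icone v ->
  w ord0 i / v ord0 i <= \sum_j w ord0 j / v ord0 j.
Proof.
move=> cw iv; rewrite (bigD1 i) //= lerDl sumr_ge0 // => j _.
by rewrite divr_ge0 // ltW.
Qed.

Lemma cle_scale_icone w v : cone w -> icone v ->
  cle w ((1 + \sum_j w ord0 j / v ord0 j) *: v).
Proof.
move=> cw iv i; rewrite mxE -ler_pdivrMr //.
by rewrite (le_trans (ratio_le_sum_ratio i cw iv)) // lerDr.
Qed.

Lemma Mthom_le a x y : 0 < a -> cle x (a *: y) -> Mthom x y <= a.
Proof.
move=> a0 xy; apply: ge_inf => //.
by exists 0 => b [b0 _]; exact: ltW.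
Qed.

Lemma ratio_le_Mthom x y i : cone x -> icone y -> x ord0 i / y ord0 i <= Mthom x y.
Proof.
move=> cx iy; apply: lb_le_inf.
  exists (1 + \sum_j x ord0 j / y ord0 j); split; last exact: cle_scale_icone.
  by rewrite ltr_pwDl // sumr_ge0 // => j _; rewrite divr_ge0 // ltW.
by move=> b [b0 /(_ i)]; rewrite mxE ler_pdivrMr.
Qed.

Lemma cle_Mthom x y : cone x -> icone y -> cle x (Mthom x y *: y).
Proof. by move=> cx iy i; rewrite mxE -ler_pdivrMr //; exact: ratio_le_Mthom. Qed.

Lemma cle_Mthom_max x y : cone x -> icone y ->
  cle x (Num.max (Mthom x y) (Mthom y x) *: y).
Proof.
move=> cx iy; apply: cle_scale_le (cle_Mthom cx iy); last by move=> i; exact: ltW.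
by rewrite le_max lexx.
Qed.

End ConeOrder.

Section ThompsonPositive.
Variables (R : realType) (n : nat).
Implicit Types (x y : 'rV[R]_n.+1) (a : R).

Lemma one_le_Mthom_max x y : icone x -> icone y -> 1 <= Num.max (Mthom x y) (Mthom y x).
Proof.
move=> ix iy; have cx : cone x by move=> i; exact: ltW.
have cy : cone y by move=> i; exact: ltW.
rewrite le_max; case: (leP 1 (x ord0 ord0 / y ord0 ord0)) => r1.
  by rewrite (le_trans r1) // ratio_le_Mthom.
rewrite (le_trans _ (ratio_le_Mthom ord0 cy ix)) ?orbT //.
by rewrite -invf_div ltW // invf_gt1 // divr_gt0.
Qed.

Lemma dT_le_ln a x y : icone x -> icone y -> 0 < a ->
  cle x (a *: y) -> cle y (a *: x) -> dT x y <= ln a.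
Proof.
move=> ix iy a0 xy yx; have M1 := one_le_Mthom_max ix iy.
rewrite /dT ler_ln ?posrE ?(lt_le_trans _ M1) //.
by rewrite ge_max !Mthom_le.
Qed.

End ThompsonPositive.

Lemma dT_rV0_le0 (R : realType) (x y : 'rV[R]_0) : dT x y <= 0.
Proof. by apply: ln_le0; rewrite ge_max !Mthom_le //; case. Qed.

Section ConcaveSelfMap.
Variables (R : realType) (k : nat) (f : 'rV[R]_k -> 'rV[R]_k).
Hypothesis f_icone : forall x, cone x -> icone (f x).
Hypothesis f_concave : cone_concave f.

(* If [f x] exceeded [f y] in some coordinate, then, extrapolating along the
   ray from [x] through [y], concavity would force [f] to leave the cone. *)
Lemma cone_concave_homo x y : cone x -> cone y -> cle x y -> cle (f x) (f y).
Proof.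
move=> cx cy xy i; set a := f x ord0 i; set b := f y ord0 i.
have a0 : 0 < a by exact: f_icone.
case: (leP a b) => // ba; exfalso.
pose t := (a - b) / (2 * a).
have t0 : 0 < t by rewrite divr_gt0 ?subr_gt0 // mulr_gt0.
have b0 : 0 < b by exact: f_icone.
have t1 : t < 1 by rewrite ltr_pdivrMr ?mulr_gt0 // mul1r; lra.
pose u := x + t^-1 *: (y - x).
have cu : cone u.
  move=> j; rewrite !mxE addr_ge0 // mulr_ge0 ?subr_ge0 ?invr_ge0 ?(ltW t0) //.
have yE : t *: u + (1 - t) *: x = y.
  by apply/matrixP => r j; rewrite !mxE; field; exact: lt0r_neq0.
have := f_concave cu cx (t := t); rewrite t0 t1 yE => /(_ isT i).
rewrite !mxE -/a -/b.
have e : (1 - t) * a = (a + b) / 2 by rewrite /t; field; exact: lt0r_neq0.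
rewrite e; move: (mulr_gt0 t0 (f_icone cu i)) ba; lra.
Qed.

Lemma concave_cle_scale b e x y : 1 <= b -> 0 < e -> cone x -> cone y ->
  cle x (b *: y) -> cle (f x) (e *: f 0) ->
  cle (f x) ((b * e / (e + b - 1)) *: f y).
Proof.
move=> b1 e0 cx cy xy fxe.
have [b_eq1|b_neq1] := eqVneq b 1.
  move: xy; rewrite b_eq1 mul1r addrK divff ?gt_eqF // !scale1r.
  exact: cone_concave_homo.
have {b1 b_neq1}b1 : 1 < b by rewrite lt_neqAle eq_sym b_neq1 b1.
have c0 : cone (0 : 'rV[R]_k) by move=> i; rewrite mxE.
pose u := (b - 1)^-1 *: (b *: y - x).
have cu : cone u.
  move=> j; rewrite !mxE mulr_ge0 ?invr_ge0 ?subr_ge0 ?(ltW b1) //.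
  by move: (xy j); rewrite mxE.
have yE : b^-1 *: x + (1 - b^-1) *: u = y.
  apply/matrixP => r j; rewrite !mxE; field.
  by rewrite subr_eq0 gt_eqF //= gt_eqF // (lt_trans ltr01).
have t01 : 0 < b^-1 < 1 by rewrite invr_gt0 invf_lt1 ?(lt_trans ltr01) // b1.
have := f_concave cx cu t01; rewrite yE => conc i.
have zu : cle 0 u by move=> j; rewrite mxE; exact: cu.
have := conc i; have := cone_concave_homo c0 cu zu i.
have := fxe i; rewrite !mxE.
set A := f x ord0 i; set B := f y ord0 i; set W := f u ord0 i; set Z := f 0 ord0 i.
move=> AZ ZW AWB.
have b0 : 0 < b by exact: lt_trans ltr01 b1.
have AWB' : e * (A + (b - 1) * W) <= b * e * B.
  have -> : e * (A + (b - 1) * W) = b * e * (b^-1 * A + (1 - b^-1) * W).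
    by field; exact: lt0r_neq0.
  by rewrite ler_wpM2l // mulr_ge0 // ltW.
have AeW : (b - 1) * A <= (b - 1) * (e * W).
  apply: ler_wpM2l; first by rewrite subr_ge0 ltW.
  exact: le_trans AZ (ler_wpM2l (ltW e0) ZW).
have den : 0 < e + b - 1 by lra.
by rewrite mulrAC ler_pdivlMr //; nra.
Qed.

End ConcaveSelfMap.

Lemma concave_dT_le (R : realType) (n : nat) (f : 'rV[R]_n.+1 -> 'rV[R]_n.+1)
    b e x y :
  (forall x, cone x -> icone (f x)) -> cone_concave f ->
  1 <= b -> 0 < e -> cone x -> cone y -> cle x (b *: y) -> cle y (b *: x) ->
  cle (f x) (e *: f 0) -> cle (f y) (e *: f 0) ->
  dT (f x) (f y) <= ln (b * e / (e + b - 1)).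
Proof.
move=> f_icone f_concave b1 e0 cx cy xy yx fxe fye.
apply: dT_le_ln; [exact: f_icone | exact: f_icone | | exact: concave_cle_scale..].
by rewrite divr_gt0 ?mulr_gt0 //; lra.
Qed.

(* [ln (1 + s) >= s / (1 + s)] with [s = (b - 1) / e], and [ln b <= b - 1]. *)
Lemma ln_concave_gain_le (R : realType) (e b B : R) : 0 < e -> 1 <= b -> b <= B ->
  ln (b * e / (e + b - 1)) <= (1 - (e + B - 1)^-1) * ln b.
Proof.
move=> e0 b1 bB.
have b0 : 0 < b by lra.
have den : 0 < e + b - 1 by lra.
have denB : 0 < e + B - 1 by lra.
have -> : b * e / (e + b - 1) = b / ((e + b - 1) / e).
  by field; rewrite !gt_eqF.
rewrite ln_div ?posrE ?divr_gt0 // [leRHS]mulrBl mul1r lerD2l lerN2.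
have ln_gain : (b - 1) / (e + b - 1) <= ln ((e + b - 1) / e).
  have := @le_ln1Dx R (- ((b - 1) / (e + b - 1))).
  have -> : 1 - (b - 1) / (e + b - 1) = ((e + b - 1) / e)^-1.
    by field; rewrite !gt_eqF.
  rewrite lnV ?posrE ?divr_gt0 // lerN2; apply.
  rewrite ltrNl opprK ltr_pdivrMr // mul1r; lra.
apply: le_trans ln_gain.
have lnb : ln b <= b - 1.
  by have := @le_ln1Dx R (b - 1); rewrite addrCA subrr addr0; apply; lra.
rewrite mulrC (le_trans (ler_wpM2r _ lnb)) ?invr_ge0 ?(ltW denB) //.
by rewrite ler_wpM2l ?subr_ge0 // lef_pV2 ?posrE //; lra.
Qed.

Lemma compact_continuous_ub (R : realType) (T : topologicalType) (U : set T)
    (g : T -> R) :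
  compact U -> {within U, continuous g} -> exists K, forall x, U x -> g x <= K.
Proof.
move=> cU cg; have [M [_ HM]] := compact_bounded (continuous_compact cg cU).
exists (M + 1) => x Ux; apply: le_trans (ler_norm _) _.
by apply: (HM (M + 1)); [rewrite ltrDl | exists x].
Qed.

Section CompactInCone.
Variables (R : realType) (k : nat) (U : set 'rV[R]_k).
Hypothesis cU : compact U.

Lemma compact_cone_ub : exists2 m, cone m & forall x, U x -> cle x m.
Proof.
have /choice [K UK] : forall i : 'I_k, exists K, forall x, U x -> x ord0 i <= K.
  move=> i; apply: compact_continuous_ub => //.
  exact/continuous_subspaceT/coord_continuous.
by exists (\row_i Num.max 0 (K i)) => [i|x Ux i]; rewrite mxE le_max ?lexx ?UK ?orbT.
Qed.

Lemma compact_icone_lb : U `<=` @icone R k ->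
  exists2 l, icone l & forall x, U x -> cle l x.
Proof.
move=> Ui.
have /choice [K UK] : forall i : 'I_k, exists K, forall x, U x -> (x ord0 i)^-1 <= K.
  move=> i; apply: compact_continuous_ub => //.
  apply: continuous_in_subspaceT => x Ux.
  have xi0 : x ord0 i != 0 by rewrite gt_eqF //; apply: Ui; exact: set_mem Ux.
  exact: cvgV xi0 (@coord_continuous R 1 k ord0 i x).
have K0 i : 0 < 1 + `|K i| by rewrite ltr_pwDl.
exists (\row_i (1 + `|K i|)^-1) => [i|x Ux i]; rewrite mxE ?invr_gt0 //.
have xi0 := Ui x Ux i.
rewrite -[x ord0 i]invrK lef_pV2 ?posrE ?invr_gt0 //.
by rewrite (le_trans (UK i x Ux)) // (le_trans (ler_norm _)) // lerDr.
Qed.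

Lemma compact_icone_cle_scale : U `<=` @icone R k ->
  exists2 B, 1 <= B & forall x y, U x -> U y -> cle x (B *: y).
Proof.
move=> Ui; have [l il Ul] := compact_icone_lb Ui.
have [m cm Um] := compact_cone_ub.
exists (1 + \sum_i m ord0 i / l ord0 i).
  by rewrite lerDl sumr_ge0 // => i _; rewrite divr_ge0 // ltW.
move=> x y Ux Uy; apply: cle_trans (Um x Ux) _.
apply: cle_trans (cle_scale_icone cm il) _.
apply: cle_scaler (Ul y Uy).
by rewrite addr_ge0 // sumr_ge0 // => i _; rewrite divr_ge0 // ltW.
Qed.

End CompactInCone.

Lemma compact_concave_cle_scale0 (R : realType) (k : nat)
    (f : 'rV[R]_k -> 'rV[R]_k) (U : set 'rV[R]_k) :
  (forall x, cone x -> icone (f x)) -> cone_concave f ->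
  compact U -> U `<=` @cone R k ->
  exists2 e, 1 <= e & forall x, U x -> cle (f x) (e *: f 0).
Proof.
move=> f_icone f_concave cU Uc; have [m cm Um] := compact_cone_ub cU.
have c0 : cone (0 : 'rV[R]_k) by move=> i; rewrite mxE.
have ifm := f_icone _ cm; have if0 := f_icone _ c0.
exists (1 + \sum_i f m ord0 i / f 0 ord0 i).
  by rewrite lerDl sumr_ge0 // => i _; rewrite divr_ge0 // ltW.
move=> x Ux; have fxm := cone_concave_homo f_icone f_concave (Uc x Ux) cm (Um x Ux).
by apply: cle_trans fxm (cle_scale_icone _ if0) => i; exact: ltW.
Qed.

Lemma concave_dT_contract (R : realType) (n : nat)
    (f : 'rV[R]_n.+1 -> 'rV[R]_n.+1) B e x y :
  (forall x, cone x -> icone (f x)) -> cone_concave f ->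
  0 < B -> 0 < e -> icone x -> icone y -> cle x (B *: y) -> cle y (B *: x) ->
  cle (f x) (e *: f 0) -> cle (f y) (e *: f 0) ->
  dT (f x) (f y) <= (1 - (e + B - 1)^-1) * dT x y.
Proof.
move=> f_icone f_concave B0 e0 ix iy xBy yBx fxe fye.
have cx : cone x by move=> i; exact: ltW.
have cy : cone y by move=> i; exact: ltW.
set b := Num.max (Mthom x y) (Mthom y x).
have b1 : 1 <= b := one_le_Mthom_max ix iy.
have bB : b <= B by rewrite ge_max !(Mthom_le B0).
have xy : cle x (b *: y) := cle_Mthom_max cx iy.
have yx : cle y (b *: x) by rewrite /b maxC; exact: cle_Mthom_max cy ix.
apply: le_trans (concave_dT_le f_icone f_concave b1 e0 cx cy xy yx fxe fye) _.
exact: ln_concave_gain_le.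
Qed.

Theorem proposition1 (R : realType) (k : nat) (f : 'rV[R]_k -> 'rV[R]_k)
  (U : set 'rV[R]_k) :
  {within @cone R k, continuous f} ->
  (forall x, @cone R k x -> @icone R k (f x)) ->
  cone_concave f ->
  U `<=` @icone R k ->
  compact U ->
  (exists V : set 'rV[R]_k, open V /\ V !=set0 /\ V `<=` U) ->
  exists c : R, 0 <= c < 1 /\
    forall x y, U x -> U y -> dT (f x) (f y) <= c * dT x y.
Proof.
move=> _ f_icone f_concave Ui cU _.
case: k f U f_icone f_concave Ui cU => [|n] f U f_icone f_concave Ui cU.
  by exists 0; rewrite lexx ltr01; split=> // x y _ _; rewrite mul0r dT_rV0_le0.
have Uc : U `<=` @cone R n.+1 by move=> x Ux i; exact/ltW/Ui.
have [B B1 UB] := compact_icone_cle_scale cU Ui.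
have [e e1 Ue] := compact_concave_cle_scale0 f_icone f_concave cU Uc.
have inv_gt0 : 0 < (e + B - 1)^-1 by rewrite invr_gt0; lra.
have inv_le1 : (e + B - 1)^-1 <= 1 by rewrite invf_le1; lra.
have B0 : 0 < B by lra.
have e0 : 0 < e by lra.
exists (1 - (e + B - 1)^-1); split; first by apply/andP; split; lra.
move=> x y Ux Uy; apply: concave_dT_contract f_icone f_concave B0 e0 (Ui x Ux) (Ui y Uy)
  (UB x y Ux Uy) (UB y x Uy Ux) (Ue x Ux) (Ue y Uy).
Qed.
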